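(* The functors $(\cdot)^*:\mathbf{D\text{-}Frm}\to\mathbf{HLAs}$ and $(\cdot)_*:\mathbf{HLAs}\to\mathbf{D\text{-}Frm}$ form a dual equivalence of categories $\mathbf{HLAs}\equiv^{\mathrm{op}}\mathbf{D\text{-}Frm}$.
   Context: $\mathbf{HLAs}$: category of Heyting-Lewis algebras (Heyting algebras with binary $\multimap$ satisfying $(a\multimap b)\wedge(a\multimap c)=a\multimap(b\wedge c)$, $(a\multimap c)\wedge(b\multimap c)=(a\vee b)\multimap c$, $(a\multimap b)\wedge(b\multimap c)\le a\multimap c$, $a\multimap a=\top$) with Heyting homomorphisms preserving $\multimap$. A $\multimap$-frame is $(X,\preceq,\sqsubset)$, $\preceq$ a partial order, with $x\preceq y\sqsubset z\Rightarrow x\sqsubset z$; $a\Rightarrow b$ and $a\Rrightarrow b$ on $\preceq$-upsets are $\{x\mid\forall y(xRy, y\in a\Rightarrow y\in b)\}$ for $R={\preceq}$, resp. $R={\sqsubset}$. A general $\multimap$-frame $(X,\preceq,\sqsubset,P)$ has $P$ a family of $\preceq$-upsets containing $X,\emptyset$, closed under $\cap,\cup,\Rightarrow,\Rrightarrow$; it is descriptive if compact (any subfamily of $P\cup\{X\setminus a\mid a\in P\}$ with the finite intersection property has nonempty intersection), $\preceq$-refined ($x\not\preceq y\Rightarrow\exists a\in P$, $x\in a$, $y\notin a$) and $\sqsubset$-refined (not $x\sqsubset y\Rightarrow\exists a,b\in P$, $x\in a\Rrightarrow b$, $y\in a$, $y\notin b$). $\mathbf{D\text{-}Frm}$: descriptive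 $\multimap$-frames with morphisms $f$ that are bounded for both relations (for $R\in\{\preceq,\sqsubset\}$: $xRy\Rightarrow f(x)Rf(y)$, and $f(x)Rz'\Rightarrow\exists z$, $xRz$, $f(z)=z'$) and satisfy $f^{-1}(a')\in P$ for all admissible $a'$ of the codomain. $(\cdot)^*$ sends $(X,\preceq,\sqsubset,P)$ to the HL-algebra $(P,\cap,\cup,\Rightarrow,\Rrightarrow,X,\emptyset)$ and $f$ to $f^{-1}$. $(\cdot)_*$ sends $\mathbb A$ to $(\mathrm{pf}A,\subseteq,\sqsubset,\tilde A)$, where $\mathrm{pf}A$ is the set of prime filters, $\tilde a=\{\mathfrak p\mid a\in\mathfrak p\}$, $\tilde A=\{\tilde a\mid a\in A\}$, and $\mathfrak p\sqsubset\mathfrak q$ iff $\forall a,b$ ($a\multimap b\in\mathfrak p$ and $a\in\mathfrak q$ imply $b\in\mathfrak q$); it sends $h$ to $h^{-1}$. *)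

From Stdlib Require Import List.

Record HLAraw := mkHLA {
  hcar : Type;
  hmeet : hcar -> hcar -> hcar;
  hjoin : hcar -> hcar -> hcar;
  himp  : hcar -> hcar -> hcar;
  hlew  : hcar -> hcar -> hcar;
  htop  : hcar;
  hbot  : hcar }.

Definition hle (A : HLAraw) (a b : hcar A) : Prop := hmeet A a b = a.

Record isHLA (A : HLAraw) : Prop := {
  meetA : forall a b c, hmeet A a (hmeet A b c) = hmeet A (hmeet A a b) c;
  joinA : forall a b c, hjoin A a (hjoin A b c) = hjoin A (hjoin A a b) c;
  meetC : forall a b, hmeet A a b = hmeet A b a;
  joinC : forall a b, hjoin A a b = hjoin A b a;
  meet_absorb : forall a b, hmeet A a (hjoin A a b) = a;
  join_absorb : forall a b, hjoin A a (hmeet A a b) = a;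
  meet_top : forall a, hmeet A a (htop A) = a;
  join_bot : forall a, hjoin A a (hbot A) = a;
  imp_res : forall a b c, hle A (hmeet A a b) c <-> hle A a (himp A b c);
  lew_meet : forall a b c,
    hmeet A (hlew A a b) (hlew A a c) = hlew A a (hmeet A b c);
  lew_join : forall a b c,
    hmeet A (hlew A a c) (hlew A b c) = hlew A (hjoin A a b) c;
  lew_trans : forall a b c,
    hle A (hmeet A (hlew A a b) (hlew A b c)) (hlew A a c);
  lew_refl : forall a, hlew A a a = htop A }.

Record isHom (A B : HLAraw) (f : hcar A -> hcar B) : Prop := {
  hom_meet : forall a b, f (hmeet A a b) = hmeet B (f a) (f b);
  hom_join : forall a b, f (hjoin A a b) = hjoin B (f a) (f b);
  hom_imp  : forall a b, f (himp A a b) = himp B (f a) (f b);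
  hom_lew  : forall a b, f (hlew A a b) = hlew B (f a) (f b);
  hom_top  : f (htop A) = htop B;
  hom_bot  : f (hbot A) = hbot B }.

Record Hom (A B : HLAraw) := mkHom {
  homf :> hcar A -> hcar B;
  homP : isHom A B homf }.

Record primef (A : HLAraw) (p : hcar A -> Prop) : Prop := {
  pf_up   : forall a b, hle A a b -> p a -> p b;
  pf_meet : forall a b, p a -> p b -> p (hmeet A a b);
  pf_top  : p (htop A);
  pf_bot  : ~ p (hbot A);
  pf_prime : forall a b, p (hjoin A a b) -> p a \/ p b }.

Record Fraw := mkFr {
  fcar : Type;
  fle : fcar -> fcar -> Prop;
  fsq : fcar -> fcar -> Prop;
  fP  : (fcar -> Prop) -> Prop }.        (* admissible sets *)

Definition sand {X : Type} (a b : X -> Prop) : X -> Prop := fun x => a x /\ b x.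
Definition sor  {X : Type} (a b : X -> Prop) : X -> Prop := fun x => a x \/ b x.
Definition simp (X : Fraw) (a b : fcar X -> Prop) : fcar X -> Prop :=
  fun x => forall y, fle X x y -> a y -> b y.
Definition slew (X : Fraw) (a b : fcar X -> Prop) : fcar X -> Prop :=
  fun x => forall y, fsq X x y -> a y -> b y.
Definition upset (X : Fraw) (a : fcar X -> Prop) : Prop :=
  forall x y, fle X x y -> a x -> a y.

Record isDescr (X : Fraw) : Prop := {
  d_refl : forall x, fle X x x;
  d_trans : forall x y z, fle X x y -> fle X y z -> fle X x z;
  d_antisym : forall x y, fle X x y -> fle X y x -> x = y;
  d_compat : forall x y z, fle X x y -> fsq X y z -> fsq X x z;
  d_upset : forall a, fP X a -> upset X a;
  d_full : fP X (fun _ => True);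
  d_empty : fP X (fun _ => False);
  d_and : forall a b, fP X a -> fP X b -> fP X (sand a b);
  d_or  : forall a b, fP X a -> fP X b -> fP X (sor a b);
  d_imp : forall a b, fP X a -> fP X b -> fP X (simp X a b);
  d_lew : forall a b, fP X a -> fP X b -> fP X (slew X a b);
  d_compact : forall F : (fcar X -> Prop) -> Prop,
      (forall s, F s -> fP X s \/ exists a, fP X a /\ s = (fun x => ~ a x)) ->
      (forall l : list (fcar X -> Prop),
          (forall s, In s l -> F s) -> exists x, forall s, In s l -> s x) ->
      exists x, forall s, F s -> s x;
  d_le_ref : forall x y, ~ fle X x y -> exists a, fP X a /\ a x /\ ~ a y;
  d_sq_ref : forall x y, ~ fsq X x y ->
      exists a b, fP X a /\ fP X b /\ slew X a b x /\ a y /\ ~ b y }.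

Record DFrame := mkDF { dfr :> Fraw; dax : isDescr dfr }.

Record isDMor (X Y : Fraw) (f : fcar X -> fcar Y) : Prop := {
  m_le_fwd : forall x y, fle X x y -> fle Y (f x) (f y);
  m_le_back : forall x z', fle Y (f x) z' -> exists z, fle X x z /\ f z = z';
  m_sq_fwd : forall x y, fsq X x y -> fsq Y (f x) (f y);
  m_sq_back : forall x z', fsq Y (f x) z' -> exists z, fsq X x z /\ f z = z';
  m_pre : forall a', fP Y a' -> fP X (fun x => a' (f x)) }.

Record DMor (X Y : DFrame) := mkDMor {
  dmf :> fcar X -> fcar Y;
  dmP : isDMor X Y dmf }.

Definition algOf (X : DFrame) : HLAraw :=
  @mkHLA {a : fcar X -> Prop | fP X a}
    (fun a b => exist _ (sand (proj1_sig a) (proj1_sig b))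
                  (d_and _ (dax X) _ _ (proj2_sig a) (proj2_sig b)))
    (fun a b => exist _ (sor (proj1_sig a) (proj1_sig b))
                  (d_or _ (dax X) _ _ (proj2_sig a) (proj2_sig b)))
    (fun a b => exist _ (simp X (proj1_sig a) (proj1_sig b))
                  (d_imp _ (dax X) _ _ (proj2_sig a) (proj2_sig b)))
    (fun a b => exist _ (slew X (proj1_sig a) (proj1_sig b))
                  (d_lew _ (dax X) _ _ (proj2_sig a) (proj2_sig b)))
    (exist _ (fun _ => True) (d_full _ (dax X)))
    (exist _ (fun _ => False) (d_empty _ (dax X))).

Definition algMor (X Y : DFrame) (f : DMor X Y) :
    hcar (algOf Y) -> hcar (algOf X) :=
  fun a => exist _ (fun x => proj1_sig a (f x))
                 (m_pre _ _ _ (dmP _ _ f) _ (proj2_sig a)).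

Definition frmOf (A : HLAraw) : Fraw :=
  @mkFr {p : hcar A -> Prop | primef A p}
    (fun p q => forall a, proj1_sig p a -> proj1_sig q a)
    (fun p q => forall a b, proj1_sig p (hlew A a b) -> proj1_sig q a ->
                            proj1_sig q b)
    (fun S => exists a, S = (fun p => proj1_sig p a)).

Lemma primef_pre (A B : HLAraw) (h : Hom A B) (q : hcar B -> Prop) :
  primef B q -> primef A (fun a => q (h a)).
Proof.
  intros [up mt tp bt pr]. destruct h as [f Hf]; simpl; destruct Hf as [hm hj hi hl ht hb].
  split.
  - intros a b Hab Ha. apply (up (f a)); [|exact Ha].
    unfold hle in *. rewrite <- hm, Hab. reflexivity.
  - intros a b Ha Hb. rewrite hm. apply mt; assumption.
  - rewrite ht. exact tp.
  - rewrite hb. exact bt.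
  - intros a b H. rewrite hj in H. apply pr. exact H.
Qed.

Definition frmMor (A B : HLAraw) (h : Hom A B) :
    fcar (frmOf B) -> fcar (frmOf A) :=
  fun q => exist _ (fun a => proj1_sig q (h a))
                 (primef_pre A B h _ (proj2_sig q)).

From Stdlib Require Import List Classical ClassicalEpsilon.
From Stdlib Require Import FunctionalExtensionality PropExtensionality ProofIrrelevance.
From mathcomp Require classical_sets.

(* The proof is a Stone/Esakia-style representation argument.  The one
   non-trivial tool is a relative prime filter theorem, proved by Zorn's lemma:
   if [R] is a preorder on an HLA compatible with ⊓, ⊔ and ≤ (e.g. [≤] itself,
   or [c ⊸ d ∈ q] for a prime filter [q]), every ⊓-closed set disjoint from an
   [R]-ideal extends to an [R]-upward closed prime filter avoiding that ideal.
   From it we obtain that [a ↦ ã] commutes with ⇒ and ⊸, separates elements,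
   and that the prime filter frame [A_*] is compact, hence descriptive; and that
   [h⁻¹] satisfies the back conditions of a frame morphism.
   Dually, the admissible sets of a descriptive frame [X] form an HLA [X^*], the
   back conditions make [f⁻¹] a homomorphism, and [x ↦ {a | x ∈ a}] is a
   bijection [X ≅ (X^* )_*] preserving and reflecting both relations
   (refinedness gives injectivity, compactness surjectivity). *)

Lemma set_ext {T : Type} (s t : T -> Prop) : (forall x, s x <-> t x) -> s = t.
Proof.
  intro H. apply functional_extensionality; intro x.
  apply propositional_extensionality, H.
Qed.

Lemma sig_eq {T : Type} {P : T -> Prop} (x y : {a : T | P a}) :
  proj1_sig x = proj1_sig y -> x = y.
Proof.
  destruct x as [x Hx], y as [y Hy]; simpl; intro E. subst y.
  f_equal. apply proof_irrelevance.
Qed.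

Lemma sig_ext {T : Type} {P : (T -> Prop) -> Prop} (x y : {a : T -> Prop | P a}) :
  (forall t, proj1_sig x t <-> proj1_sig y t) -> x = y.
Proof. intro H. apply sig_eq, set_ext, H. Qed.

Lemma zorn_sets (T : Type) (P : (T -> Prop) -> Prop) :
  (forall F : (T -> Prop) -> Prop, (forall K, F K -> P K) ->
     (forall K1 K2, F K1 -> F K2 ->
        (forall x, K1 x -> K2 x) \/ (forall x, K2 x -> K1 x)) ->
     P (fun x => exists K, F K /\ K x)) ->
  exists M, P M /\ forall K, P K -> (forall x, M x -> K x) -> forall x, K x -> M x.
Proof.
  intros Hchain.
  destruct (@classical_sets.Zorn_bigcup T P) as [M [PM Mmax]].
  - intros F FP Ftot.
    replace (classical_sets.bigcup F (fun X => X))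
      with (fun x => exists K, F K /\ K x).
    + apply Hchain; [exact FP | exact Ftot].
    + apply set_ext; intro x; split.
      * intros [K [FK Kx]]; exists K; assumption.
      * intros [K FK Kx]; exists K; split; assumption.
  - exists M; split; [exact PM|].
    intros K PK MK x Kx. apply NNPP; intro nMx.
    apply (Mmax K); [split; [exact MK|] | exact PK].
    intro KM. exact (nMx (KM x Kx)).
Qed.
Section HeytingLewisAlgebra.
Variable A : HLAraw.
Hypothesis HA : isHLA A.

Local Notation "a ≤ b" := (hle A a b) (at level 70).
Local Notation "a ⊓ b" := (hmeet A a b) (at level 40, left associativity).
Local Notation "a ⊔ b" := (hjoin A a b) (at level 50, left associativity).
Local Notation "a ⊸ b" := (hlew A a b) (at level 45, right associativity).

Lemma le_refl a : a ≤ a.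
Proof.
  unfold hle. pose proof (meet_absorb _ HA a (a ⊓ a)) as E.
  rewrite (join_absorb _ HA) in E. exact E.
Qed.

Lemma le_trans a b c : a ≤ b -> b ≤ c -> a ≤ c.
Proof. unfold hle; intros H1 H2. rewrite <- H1, <- (meetA _ HA), H2. reflexivity. Qed.

Lemma le_antisym a b : a ≤ b -> b ≤ a -> a = b.
Proof.
  unfold hle; intros H1 H2. rewrite <- H1, (meetC _ HA). exact H2.
Qed.

Lemma meet_lb1 a b : a ⊓ b ≤ a.
Proof.
  unfold hle. rewrite <- (meetA _ HA), (meetC _ HA b a), (meetA _ HA), (le_refl a).
  reflexivity.
Qed.

Lemma meet_lb2 a b : a ⊓ b ≤ b.
Proof. unfold hle. rewrite <- (meetA _ HA), (le_refl b). reflexivity. Qed.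

Lemma meet_glb a b c : c ≤ a -> c ≤ b -> c ≤ a ⊓ b.
Proof. unfold hle; intros H1 H2. rewrite (meetA _ HA), H1, H2. reflexivity. Qed.

Lemma join_ub1 a b : a ≤ a ⊔ b.
Proof. apply (meet_absorb _ HA). Qed.

Lemma join_ub2 a b : b ≤ a ⊔ b.
Proof. rewrite (joinC _ HA). apply (meet_absorb _ HA). Qed.

Lemma le_join_eq a b : a ≤ b <-> a ⊔ b = b.
Proof.
  unfold hle; split; intro H.
  - rewrite <- H, (joinC _ HA), (meetC _ HA). apply (join_absorb _ HA).
  - rewrite <- H. apply (meet_absorb _ HA).
Qed.

Lemma join_lub a b c : a ≤ c -> b ≤ c -> a ⊔ b ≤ c.
Proof.
  rewrite !le_join_eq; intros H1 H2. rewrite <- (joinA _ HA), H2. exact H1.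
Qed.

Lemma bot_le a : hbot A ≤ a.
Proof.
  unfold hle. rewrite <- (meet_absorb _ HA (hbot A) a) at 2.
  rewrite (joinC _ HA), (join_bot _ HA). reflexivity.
Qed.

Lemma le_top a : a ≤ htop A.
Proof. apply (meet_top _ HA). Qed.

Lemma meet_mono a a' b b' : a ≤ a' -> b ≤ b' -> a ⊓ b ≤ a' ⊓ b'.
Proof.
  intros. apply meet_glb.
  - apply (le_trans _ a); [apply meet_lb1 | assumption].
  - apply (le_trans _ b); [apply meet_lb2 | assumption].
Qed.

Lemma join_mono a a' b b' : a ≤ a' -> b ≤ b' -> a ⊔ b ≤ a' ⊔ b'.
Proof.
  intros. apply join_lub.
  - apply (le_trans _ a'); [assumption | apply join_ub1].
  - apply (le_trans _ b'); [assumption | apply join_ub2].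
Qed.

Lemma imp_mp a b : a ⊓ himp A a b ≤ b.
Proof. rewrite (meetC _ HA). apply (imp_res _ HA), le_refl. Qed.

(* Residuation makes the lattice distributive. *)
Lemma meet_join_distr u v w : u ⊓ (v ⊔ w) ≤ u ⊓ v ⊔ u ⊓ w.
Proof.
  rewrite (meetC _ HA). apply (imp_res _ HA). apply join_lub; apply (imp_res _ HA);
    rewrite (meetC _ HA); [apply join_ub1 | apply join_ub2].
Qed.

Lemma join_meet_distr j x y : (j ⊔ x) ⊓ (j ⊔ y) ≤ j ⊔ x ⊓ y.
Proof.
  eapply le_trans; [apply meet_join_distr | apply join_lub].
  - eapply le_trans; [apply meet_lb2 | apply join_ub1].
  - rewrite (meetC _ HA). eapply le_trans; [apply meet_join_distr | apply join_lub].
    + eapply le_trans; [apply meet_lb2 | apply join_ub1].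
    + rewrite (meetC _ HA). apply join_ub2.
Qed.

Lemma lew_mono_r e c d : c ≤ d -> e ⊸ c ≤ e ⊸ d.
Proof. unfold hle; intro H. rewrite (lew_meet _ HA), H. reflexivity. Qed.

Lemma lew_anti_l c c' d : c' ≤ c -> c ⊸ d ≤ c' ⊸ d.
Proof.
  rewrite le_join_eq; unfold hle; intro H.
  rewrite (lew_join _ HA), (joinC _ HA), H. reflexivity.
Qed.

Lemma lew_bot b : hbot A ⊸ b = htop A.
Proof.
  apply le_antisym; [apply le_top|].
  rewrite <- (lew_refl _ HA (hbot A)). apply lew_mono_r, bot_le.
Qed.

Record compatible (R : hcar A -> hcar A -> Prop) : Prop := {
  R_refl : forall c, R c c;
  R_trans : forall c d e, R c d -> R d e -> R c e;
  R_anti : forall c c' d, c' ≤ c -> R c d -> R c' d;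
  R_mono : forall c d d', d ≤ d' -> R c d -> R c d';
  R_meet : forall c d1 d2, R c d1 -> R c d2 -> R c (d1 ⊓ d2);
  R_join : forall c1 c2 d, R c1 d -> R c2 d -> R (c1 ⊔ c2) d }.

Lemma compatible_le : compatible (hle A).
Proof.
  split; intros.
  - apply le_refl.
  - eapply le_trans; eassumption.
  - eapply le_trans; eassumption.
  - eapply le_trans; eassumption.
  - apply meet_glb; assumption.
  - apply join_lub; assumption.
Qed.

Lemma compatible_lew q : primef A q -> compatible (fun c d => q (c ⊸ d)).
Proof.
  intros [up mt tp _ _]. split.
  - intro c. rewrite (lew_refl _ HA). exact tp.
  - intros c d e H1 H2. apply (up _ _ (lew_trans _ HA c d e)), mt; assumption.
  - intros c c' d H H1. apply (up _ _ (lew_anti_l _ _ _ H)); assumption.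
  - intros c d d' H H1. apply (up _ _ (lew_mono_r _ _ _ H)); assumption.
  - intros c d1 d2 H1 H2. rewrite <- (lew_meet _ HA). apply mt; assumption.
  - intros c1 c2 d H1 H2. rewrite <- (lew_join _ HA). apply mt; assumption.
Qed.

Record meet_closed (G : hcar A -> Prop) : Prop := {
  mc_top : G (htop A);
  mc_meet : forall a b, G a -> G b -> G (a ⊓ b) }.

Record R_ideal (R : hcar A -> hcar A -> Prop) (J : hcar A -> Prop) : Prop := {
  id_down : forall a b, a ≤ b -> J b -> J a;
  id_join : forall a b, J a -> J b -> J (a ⊔ b);
  id_bot : J (hbot A);
  id_Rdown : forall c d, R c d -> J d -> J c }.

Lemma principal_filter a : meet_closed (fun y => a ≤ y).
Proof. split; [apply le_top | intros; apply meet_glb; assumption]. Qed.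

Lemma principal_ideal b : R_ideal (hle A) (fun y => y ≤ b).
Proof.
  split; intros.
  - eapply le_trans; eassumption.
  - apply join_lub; assumption.
  - apply bot_le.
  - eapply le_trans; eassumption.
Qed.

Section PrimeFilterTheorem.
Variables (R : hcar A -> hcar A -> Prop) (G J0 : hcar A -> Prop).
Hypotheses (HR : compatible R) (HG : meet_closed G) (HJ0 : R_ideal R J0)
  (GJ0 : forall a, G a -> J0 a -> False).

Definition separating (J : hcar A -> Prop) : Prop :=
  R_ideal R J /\ (forall a, J0 a -> J a) /\ (forall a, G a -> J a -> False).

(* Separating ideals are closed under unions of chains (joined with [J0], so
   that the empty chain is covered as well). *)
Lemma separating_chain (F : (hcar A -> Prop) -> Prop) :
  (forall K, F K -> separating (fun x => K x \/ J0 x)) ->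
  (forall K1 K2, F K1 -> F K2 -> (forall x, K1 x -> K2 x) \/ (forall x, K2 x -> K1 x)) ->
  separating (fun x => (exists K, F K /\ K x) \/ J0 x).
Proof.
  intros FS Ftot.
  assert (two_in_member : forall x y, (exists K, F K /\ K x) \/ J0 x ->
            (exists K, F K /\ K y) \/ J0 y ->
            (J0 x /\ J0 y) \/ exists K, F K /\ (K x \/ J0 x) /\ (K y \/ J0 y)).
  { intros x y [[K1 [F1 K1x]] | Jx] [[K2 [F2 K2y]] | Jy]; auto.
    - right. destruct (Ftot K1 K2 F1 F2) as [S | S].
      + exists K2; auto.
      + exists K1; auto.
    - right; exists K1; auto.
    - right; exists K2; auto. }
  repeat split.
  - intros a b Hab [[K [FK Kb]] | Jb].
    + destruct (id_down _ _ (proj1 (FS K FK)) a b Hab (or_introl Kb)) as [Ka | Ja];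
        [left; exists K | right]; auto.
    + right. apply (id_down _ _ HJ0 a b); assumption.
  - intros a b Ha Hb. destruct (two_in_member a b Ha Hb) as [[Ja Jb] | [K [FK [Ka Kb]]]].
    + right. apply (id_join _ _ HJ0); assumption.
    + destruct (id_join _ _ (proj1 (FS K FK)) a b Ka Kb); [left; exists K|right]; auto.
  - right. apply (id_bot _ _ HJ0).
  - intros c d Rcd [[K [FK Kd]] | Jd].
    + destruct (id_Rdown _ _ (proj1 (FS K FK)) c d Rcd (or_introl Kd));
        [left; exists K | right]; auto.
    + right. apply (id_Rdown _ _ HJ0 c d); assumption.
  - intros a Ja; right; exact Ja.
  - intros a Ga [[K [FK Ka]] | Ja].
    + exact (proj2 (proj2 (FS K FK)) a Ga (or_introl Ka)).
    + exact (GJ0 a Ga Ja).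
Qed.

Lemma maximal_separating : exists M, separating M /\
  forall K, separating K -> (forall x, M x -> K x) -> forall x, K x -> M x.
Proof.
  destruct (zorn_sets _ (fun K => separating (fun x => K x \/ J0 x)) separating_chain)
    as [M0 [SM M0max]].
  exists (fun x => M0 x \/ J0 x); split; [exact SM|].
  intros K SK MK x Kx. left. apply (M0max K); [|intros y Hy; apply MK; auto | exact Kx].
  replace (fun x => K x \/ J0 x) with K; [exact SK|].
  apply set_ext; intro y; split; [auto|].
  intros [Ky | Jy]; [exact Ky | exact (proj1 (proj2 SK) y Jy)].
Qed.

(* Fix a maximal separating ideal [M]; its complement is the sought filter. *)
Section Maximal.
Variable M : hcar A -> Prop.
Hypotheses (SM : separating M)
  (Mmax : forall K, separating K -> (forall x, M x -> K x) -> forall x, K x -> M x).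

(* If [x ∉ M], the ideal generated by [M] and [x] meets [G]: some [g ∈ G] is
   [R]-below [j ⊔ x] with [j ∈ M]. *)
Lemma maximal_escape x : ~ M x -> exists g j, G g /\ M j /\ R g (j ⊔ x).
Proof.
  destruct SM as [IM [J0M GM]].
  intro nMx. apply NNPP; intro NE. apply nMx.
  assert (R_up : forall j c, R c j -> R c (j ⊔ x)).
  { intros j c. apply (R_mono _ HR), join_ub1. }
  apply (Mmax (fun c => exists j, M j /\ R c (j ⊔ x))).
  - repeat split.
    + intros a b H [j [Mj Rb]]. exists j; split; [exact Mj | apply (R_anti _ HR b); assumption].
    + intros a b [j1 [M1 R1]] [j2 [M2 R2]]. exists (j1 ⊔ j2); split.
      * apply (id_join _ _ IM); assumption.
      * apply (R_join _ HR); eapply (R_mono _ HR); try eassumption;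
          apply join_mono; (apply le_refl || apply join_ub1 || apply join_ub2).
    + exists (hbot A); split; [apply (id_bot _ _ IM) | apply R_up, (R_refl _ HR)].
    + intros c d H [j [Mj Rd]]. exists j; split; [exact Mj | apply (R_trans _ HR _ d); assumption].
    + intros a Ja. exists a; split; [apply J0M; exact Ja | apply R_up, (R_refl _ HR)].
    + intros a Ga [j [Mj Ra]]. apply NE. exists a, j; auto.
  - intros a Ma. exists a; split; [exact Ma | apply R_up, (R_refl _ HR)].
  - exists (hbot A); split; [apply (id_bot _ _ IM)|]. apply (R_mono _ HR _ x), (R_refl _ HR).
    apply join_ub2.
Qed.

Lemma maximal_complement_meet x y : ~ M x -> ~ M y -> ~ M (x ⊓ y).
Proof.
  destruct SM as [IM [_ GM]].
  intros nx ny Mxy.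
  destruct (maximal_escape x nx) as [g1 [j1 [G1 [M1 R1]]]].
  destruct (maximal_escape y ny) as [g2 [j2 [G2 [M2 R2]]]].
  (* [g1 ⊓ g2] is [R]-below [(j1 ⊔ j2) ⊔ (x ⊓ y)], which lies in [M]. *)
  apply (GM (g1 ⊓ g2)); [apply (mc_meet _ HG); assumption|].
  apply (id_Rdown _ _ IM _ (j1 ⊔ j2 ⊔ x ⊓ y)).
  - eapply (R_mono _ HR); [apply join_meet_distr|]. apply (R_meet _ HR).
    + apply (R_anti _ HR g1); [apply meet_lb1|]. eapply (R_mono _ HR); [|exact R1].
      apply join_mono; [apply join_ub1 | apply le_refl].
    + apply (R_anti _ HR g2); [apply meet_lb2|]. eapply (R_mono _ HR); [|exact R2].
      apply join_mono; [apply join_ub2 | apply le_refl].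
  - apply (id_join _ _ IM); [apply (id_join _ _ IM)|]; assumption.
Qed.

Lemma maximal_complement_prime : primef A (fun a => ~ M a).
Proof.
  destruct SM as [IM [_ GM]]. split.
  - intros a b H na Mb. apply na, (id_down _ _ IM a b); assumption.
  - exact maximal_complement_meet.
  - intro Mt. exact (GM _ (mc_top _ HG) Mt).
  - intro nb. apply nb, (id_bot _ _ IM).
  - intros a b nab. apply NNPP; intro N. apply nab, (id_join _ _ IM); apply NNPP; tauto.
Qed.

End Maximal.

Theorem prime_filter_theorem :
  exists z, primef A z /\ (forall a, G a -> z a) /\ (forall a, J0 a -> ~ z a) /\
            (forall c d, R c d -> z c -> z d).
Proof.
  destruct maximal_separating as [M [SM Mmax]].
  exists (fun a => ~ M a). split; [exact (maximal_complement_prime M SM Mmax)|].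
  destruct SM as [IM [J0M GM]]. repeat split.
  - intros a Ga Ma. exact (GM a Ga Ma).
  - intros a Ja nMa. exact (nMa (J0M a Ja)).
  - intros c d H nc Md. exact (nc (id_Rdown _ _ IM c d H Md)).
Qed.

End PrimeFilterTheorem.

Lemma pf_meet_iff (p : hcar A -> Prop) a b : primef A p -> (p (a ⊓ b) <-> p a /\ p b).
Proof.
  intro Hp; split.
  - intro H; split; eapply (pf_up _ _ Hp); eauto; [apply meet_lb1 | apply meet_lb2].
  - intros [Ha Hb]; apply (pf_meet _ _ Hp); assumption.
Qed.

Lemma pf_join_iff (p : hcar A -> Prop) a b : primef A p -> (p (a ⊔ b) <-> p a \/ p b).
Proof.
  intro Hp; split.
  - apply (pf_prime _ _ Hp).
  - intros [H | H]; eapply (pf_up _ _ Hp); eauto; [apply join_ub1 | apply join_ub2].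
Qed.

Definition tilde (a : hcar A) : fcar (frmOf A) -> Prop := fun p => proj1_sig p a.

Lemma tilde_meet a b : tilde (a ⊓ b) = sand (tilde a) (tilde b).
Proof. apply set_ext; intros [p Hp]. apply pf_meet_iff, Hp. Qed.

Lemma tilde_join a b : tilde (a ⊔ b) = sor (tilde a) (tilde b).
Proof. apply set_ext; intros [p Hp]. apply pf_join_iff, Hp. Qed.

Lemma tilde_top : tilde (htop A) = (fun _ => True).
Proof. apply set_ext; intros [p Hp]; split; [auto | intros _; apply (pf_top _ _ Hp)]. Qed.

Lemma tilde_bot : tilde (hbot A) = (fun _ => False).
Proof. apply set_ext; intros [p Hp]; split; [apply (pf_bot _ _ Hp) | contradiction]. Qed.

(* If [a ⇒ b ∉ x], the filter generated by [x] and [a] extends to a prime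
   filter avoiding [b]. *)
Lemma tilde_imp a b : simp (frmOf A) (tilde a) (tilde b) = tilde (himp A a b).
Proof.
  apply set_ext; intros [x Hx]; unfold tilde, simp; simpl; split.
  - intro H. apply NNPP; intro N.
    set (G := fun y => exists c, x c /\ c ⊓ a ≤ y).
    assert (HG : meet_closed G).
    { split.
      - exists (htop A); split; [apply (pf_top _ _ Hx) | apply le_top].
      - intros y1 y2 [c1 [X1 L1]] [c2 [X2 L2]]. exists (c1 ⊓ c2); split.
        + apply (pf_meet _ _ Hx); assumption.
        + apply meet_glb; eapply le_trans; [| exact L1 | | exact L2]; apply meet_mono;
            (apply meet_lb1 || apply meet_lb2 || apply le_refl). }
    destruct (prime_filter_theorem _ G _ compatible_le HG (principal_ideal b))
      as [z [Hz [Gz [Jz _]]]].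
    + intros y [c [Xc Lc]] Ly. apply N. eapply (pf_up _ _ Hx); [|exact Xc].
      apply (imp_res _ HA). eapply le_trans; eassumption.
    + apply (Jz b (le_refl b)), (H (exist _ z Hz)); simpl.
      * intros c Xc. apply Gz. exists c; split; [exact Xc | apply meet_lb1].
      * apply Gz. exists (htop A); split; [apply (pf_top _ _ Hx) | apply meet_lb2].
  - intros H [y Hy] Le Ya; simpl in *. eapply (pf_up _ _ Hy); [apply (imp_mp a b)|].
    apply (pf_meet _ _ Hy); auto.
Qed.

(* If [a ⊸ b ∉ x], the filter [↑a] extends to a prime filter [z] with [x ⊏ z]
   and [b ∉ z]: the relative prime filter theorem for [R c d := c ⊸ d ∈ x]. *)
Lemma tilde_lew a b : slew (frmOf A) (tilde a) (tilde b) = tilde (a ⊸ b).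
Proof.
  apply set_ext; intros [x Hx]; unfold tilde, slew; simpl; split.
  - intro H. apply NNPP; intro N.
    pose proof (compatible_lew x Hx) as Rx.
    assert (J0 : R_ideal (fun c d => x (c ⊸ d)) (fun c => x (c ⊸ b))).
    { split.
      - intros c d L Xd. eapply (pf_up _ _ Hx); [apply lew_anti_l; exact L | exact Xd].
      - intros c d Xc Xd. rewrite <- (lew_join _ HA). apply (pf_meet _ _ Hx); assumption.
      - rewrite lew_bot. apply (pf_top _ _ Hx).
      - intros c d X1 X2. exact (R_trans _ Rx c d b X1 X2). }
    destruct (prime_filter_theorem _ _ _ Rx (principal_filter a) J0) as [z [Hz [Gz [Jz Rz]]]].
    + intros y Ly Xy. apply N. eapply (pf_up _ _ Hx); [apply lew_anti_l; exact Ly | exact Xy].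
    + apply (Jz b); [rewrite (lew_refl _ HA); apply (pf_top _ _ Hx)|].
      apply (H (exist _ z Hz)); simpl.
      * intros c d Xcd Zc. exact (Rz c d Xcd Zc).
      * apply Gz, le_refl.
  - intros H [y Hy] Sq Ya; simpl in *. exact (Sq a b H Ya).
Qed.

Lemma prime_filter_separation a b : ~ a ≤ b ->
  exists p : fcar (frmOf A), tilde a p /\ ~ tilde b p.
Proof.
  intro N.
  destruct (prime_filter_theorem _ _ _ compatible_le (principal_filter a) (principal_ideal b))
    as [z [Hz [Gz [Jz _]]]].
  - intros y L1 L2. apply N. eapply le_trans; eassumption.
  - exists (exist _ z Hz); split; [apply Gz | apply Jz]; apply le_refl.
Qed.

Lemma tilde_inj a b : tilde a = tilde b -> a = b.
Proof.
  intro E. apply le_antisym; apply NNPP; intro N;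
    destruct (prime_filter_separation _ _ N) as [p [P1 P2]]; apply P2.
  - rewrite <- E. exact P1.
  - rewrite E. exact P1.
Qed.

Definition meetl (l : list (hcar A)) : hcar A := fold_right (hmeet A) (htop A) l.
Definition joinl (l : list (hcar A)) : hcar A := fold_right (hjoin A) (hbot A) l.

Lemma meetl_app l1 l2 : meetl (l1 ++ l2) ≤ meetl l1 ⊓ meetl l2.
Proof.
  induction l1 as [|c l IH]; simpl.
  - apply meet_glb; [apply le_top | apply le_refl].
  - apply meet_glb; [apply meet_glb; [apply meet_lb1|] | ];
      (eapply le_trans; [apply meet_mono; [apply le_refl | exact IH] |]);
      [apply (le_trans _ (meetl l ⊓ meetl l2)); [apply meet_lb2 | apply meet_lb1]
      | apply (le_trans _ (meetl l ⊓ meetl l2)); [apply meet_lb2 | apply meet_lb2]].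
Qed.

Lemma joinl_app l1 l2 : joinl l1 ⊔ joinl l2 ≤ joinl (l1 ++ l2).
Proof.
  apply join_lub.
  - induction l1 as [|c l IH]; simpl; [apply bot_le|].
    apply join_mono; [apply le_refl | exact IH].
  - induction l1 as [|c l IH]; simpl; [apply le_refl|].
    eapply le_trans; [exact IH | apply join_ub2].
Qed.

Lemma pf_meetl (p : hcar A -> Prop) l :
  primef A p -> (forall a, In a l -> p a) -> p (meetl l).
Proof.
  intro Hp; induction l as [|c l IH]; simpl; intros H; [apply (pf_top _ _ Hp)|].
  apply (pf_meet _ _ Hp); auto.
Qed.

Lemma pf_joinl (p : hcar A -> Prop) l : primef A p -> p (joinl l) -> exists b, In b l /\ p b.
Proof.
  intro Hp; induction l as [|c l IH]; simpl; intros H; [destruct (pf_bot _ _ Hp H)|].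
  destruct (pf_prime _ _ Hp _ _ H) as [H1 | H1]; [exists c; auto|].
  destruct (IH H1) as [b [I Pb]]; exists b; auto.
Qed.

(* Compactness of the prime filter frame: a family of sets [ã] and
   complements of sets [b̃] with the finite intersection property yields
   the separation of the filter generated by the [a]'s from the ideal
   generated by the [b]'s, hence a prime filter in all of them. *)
Lemma frm_compact (F : (fcar (frmOf A) -> Prop) -> Prop) :
  (forall s, F s -> fP (frmOf A) s \/
     exists t, fP (frmOf A) t /\ s = (fun x => ~ t x)) ->
  (forall l, (forall s, In s l -> F s) -> exists x, forall s, In s l -> s x) ->
  exists x, forall s, F s -> s x.
Proof.
  intros HF Hfin.
  set (G := fun y => exists l, (forall a, In a l -> F (tilde a)) /\ meetl l ≤ y).
  set (J := fun y => exists l, (forall b, In b l -> F (fun x => ~ tilde b x)) /\ y ≤ joinl l).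
  assert (HG : meet_closed G).
  { split.
    - exists nil; split; [contradiction | apply le_refl].
    - intros y1 y2 [l1 [F1 L1]] [l2 [F2 L2]]. exists (l1 ++ l2); split.
      + intros a I; apply in_app_or in I; destruct I; auto.
      + eapply le_trans; [apply meetl_app | apply meet_mono; assumption]. }
  assert (HJ : R_ideal (hle A) J).
  { split.
    - intros a b L [l [F1 L1]]. exists l; split; [exact F1 | eapply le_trans; eassumption].
    - intros y1 y2 [l1 [F1 L1]] [l2 [F2 L2]]. exists (l1 ++ l2); split.
      + intros a I; apply in_app_or in I; destruct I; auto.
      + eapply le_trans; [apply join_mono; eassumption | apply joinl_app].
    - exists nil; split; [contradiction | apply le_refl].
    - intros a b L [l [F1 L1]]. exists l; split; [exact F1 | eapply le_trans; eassumption]. }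
  destruct (prime_filter_theorem _ _ _ compatible_le HG HJ) as [z [Hz [Gz [Jz _]]]].
  - (* disjointness is the finite intersection property *)
    intros y [l1 [F1 L1]] [l2 [F2 L2]].
    destruct (Hfin (map tilde l1 ++ map (fun b x => ~ tilde b x) l2)) as [x Hx].
    + intros s I. apply in_app_or in I.
      destruct I as [I | I]; apply in_map_iff in I; destruct I as [c [E I]]; subst; auto.
    + assert (Xjoin : tilde (joinl l2) x).
      { apply (pf_up _ _ (proj2_sig x) (meetl l1)); [apply (le_trans _ y); assumption|].
        apply pf_meetl; [exact (proj2_sig x)|]. intros a I.
        apply (Hx (tilde a)), in_or_app; left; apply in_map, I. }
      destruct (pf_joinl _ l2 (proj2_sig x) Xjoin) as [b [I Pb]].
      apply (Hx (fun x => ~ tilde b x)); [|exact Pb].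
      apply in_or_app; right. apply (in_map (fun b x => ~ tilde b x)), I.
  - exists (exist _ z Hz). intros s Fs.
    destruct (HF s Fs) as [[a E] | [t [[b E] E']]]; subst.
    + apply Gz. exists (a :: nil); split; [intros c [E | []]; subst; exact Fs | apply meet_lb1].
    + apply Jz. exists (b :: nil); split; [intros c [E | []]; subst; exact Fs | apply join_ub1].
Qed.

Lemma frm_descr : isDescr (frmOf A).
Proof.
  split.
  - intros x a; auto.
  - intros x y z H1 H2 a Ha; auto.
  - intros x y H1 H2. apply sig_ext. intro; split; auto.
  - intros x y z H1 H2 a b Hab Hz. exact (H2 a b (H1 _ Hab) Hz).
  - intros s [a E] x y Le Hx; subst; exact (Le a Hx).
  - exists (htop A). symmetry. apply tilde_top.
  - exists (hbot A). symmetry. apply tilde_bot.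
  - intros s t [a Ea] [b Eb]; subst. exists (a ⊓ b). symmetry; apply tilde_meet.
  - intros s t [a Ea] [b Eb]; subst. exists (a ⊔ b). symmetry; apply tilde_join.
  - intros s t [a Ea] [b Eb]; subst. exists (himp A a b). apply tilde_imp.
  - intros s t [a Ea] [b Eb]; subst. exists (a ⊸ b). apply tilde_lew.
  - exact frm_compact.
  - intros x y N. apply not_all_ex_not in N. destruct N as [a N].
    exists (tilde a); split; [exists a; reflexivity|]. unfold tilde. tauto.
  - intros x y N. apply not_all_ex_not in N. destruct N as [a N].
    apply not_all_ex_not in N. destruct N as [b N].
    exists (tilde a), (tilde b). split; [exists a; reflexivity|]. split; [exists b; reflexivity|].
    unfold tilde, slew. split; [|tauto]. intros y' Sq Ya. exact (Sq a b ltac:(tauto) Ya).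
Qed.

End HeytingLewisAlgebra.

Section DualMorphism.
Variables (A B : HLAraw) (h : Hom A B).
Hypotheses (HA : isHLA A) (HB : isHLA B).

Lemma image_complement_ideal (p' : hcar A -> Prop) (Hp' : primef A p') :
  R_ideal B (hle B) (fun y => exists b, ~ p' b /\ hle B y (h b)).
Proof.
  destruct (homP _ _ h) as [_ hj _ _ _ hb].
  split.
  - intros a b L [b' [N L']]. exists b'; split; [exact N | eapply le_trans; eassumption].
  - intros y1 y2 [b1 [N1 L1]] [b2 [N2 L2]]. exists (hjoin A b1 b2). split.
    + intro P. destruct (pf_prime _ _ Hp' _ _ P); auto.
    + rewrite hj. apply join_mono; assumption.
  - exists (hbot A); split; [apply (pf_bot _ _ Hp')|]. rewrite hb. apply le_refl, HB.
  - intros c d L [b' [N L']]. exists b'; split; [exact N | eapply le_trans; eassumption].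
Qed.

Lemma image_complement_lew_ideal (q : hcar B -> Prop) (Hq : primef B q)
    (p' : hcar A -> Prop) (Hp' : primef A p') :
  R_ideal B (fun c d => q (hlew B c d)) (fun c => exists b, ~ p' b /\ q (hlew B c (h b))).
Proof.
  destruct (homP _ _ h) as [_ hj _ _ _ _].
  pose proof (compatible_lew B HB q Hq) as Rq.
  split.
  - intros c d L [b [N Q]]. exists b; split; [exact N|].
    eapply (pf_up _ _ Hq); [apply lew_anti_l; [exact HB | exact L] | exact Q].
  - intros c1 c2 [b1 [N1 Q1]] [b2 [N2 Q2]]. exists (hjoin A b1 b2). split.
    + intro P. destruct (pf_prime _ _ Hp' _ _ P); auto.
    + rewrite hj, <- (lew_join _ HB). apply (pf_meet _ _ Hq).
      * eapply (pf_up _ _ Hq); [apply lew_mono_r; [exact HB | apply join_ub1, HB] | exact Q1].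
      * eapply (pf_up _ _ Hq); [apply lew_mono_r; [exact HB | apply join_ub2, HB] | exact Q2].
  - exists (hbot A). split; [apply (pf_bot _ _ Hp')|].
    rewrite lew_bot; [apply (pf_top _ _ Hq) | exact HB].
  - intros c d Q1 [b [N Q2]]. exists b.
    split; [exact N | exact (R_trans _ _ Rq c d (h b) Q1 Q2)].
Qed.

(* Back condition for [≼]: if [h⁻¹ q ⊆ p'], the filter generated by [q] and
   [h p'] misses the ideal generated by [h] of the complement of [p'], so it
   extends to a prime filter [z ⊇ q] with [h⁻¹ z = p']. *)
Lemma frmMor_le_back (q : fcar (frmOf B)) (p' : fcar (frmOf A)) :
  fle (frmOf A) (frmMor A B h q) p' ->
  exists z, fle (frmOf B) q z /\ frmMor A B h z = p'.
Proof.
  destruct (homP _ _ h) as [hm _ hi _ _ _].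
  destruct q as [q Hq], p' as [p' Hp']; simpl; intro Le.
  set (G := fun y => exists c a, q c /\ p' a /\ hle B (hmeet B c (h a)) y).
  assert (HG : meet_closed B G).
  { split.
    - exists (htop B), (htop A). split; [apply (pf_top _ _ Hq)|].
      split; [apply (pf_top _ _ Hp') | apply le_top, HB].
    - intros y1 y2 [c1 [a1 [Q1 [P1 L1]]]] [c2 [a2 [Q2 [P2 L2]]]].
      exists (hmeet B c1 c2), (hmeet A a1 a2). split; [apply (pf_meet _ _ Hq); assumption|].
      split; [apply (pf_meet _ _ Hp'); assumption|]. rewrite hm.
      apply meet_glb; try exact HB; (eapply le_trans; [exact HB | | eassumption]);
        apply meet_mono; try exact HB; (apply meet_lb1 || apply meet_lb2); exact HB. }
  pose proof (image_complement_ideal p' Hp') as HJ.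
  destruct (prime_filter_theorem B HB _ _ _ (compatible_le B HB) HG HJ)
    as [z [Hz [Gz [Jz _]]]].
  - (* [c ⊓ h a ≤ h b] with [c ∈ q] puts [h (a ⇒ b)] in [q], so [a ⇒ b ∈ p'] *)
    intros y [c [a [Qc [Pa L1]]]] [b [Nb L2]]. apply Nb.
    assert (Q : q (h (himp A a b))).
    { rewrite hi. eapply (pf_up _ _ Hq); [|exact Qc]. apply (imp_res _ HB).
      apply (le_trans B HB _ y); assumption. }
    apply (pf_up _ _ Hp' _ _ (imp_mp _ HA a b)), (pf_meet _ _ Hp'); [exact Pa | exact (Le _ Q)].
  - exists (exist _ z Hz). simpl. split.
    + intros c Qc. apply Gz. exists c, (htop A). split; [exact Qc|].
      split; [apply (pf_top _ _ Hp') | apply meet_lb1, HB].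
    + apply sig_ext; simpl. intro a. split.
      * intro Z. apply NNPP; intro N. apply (Jz (h a)); [|exact Z].
        exists a; split; [exact N | apply le_refl, HB].
      * intro Pa. apply Gz. exists (htop B), a. split; [apply (pf_top _ _ Hq)|].
        split; [exact Pa | apply meet_lb2, HB].
Qed.

(* Back condition for [⊏]: if [h⁻¹ q ⊏ p'], the relative prime filter theorem
   for [R c d := c ⊸ d ∈ q] yields [q ⊏ z] with [h⁻¹ z = p']. *)
Lemma frmMor_sq_back (q : fcar (frmOf B)) (p' : fcar (frmOf A)) :
  fsq (frmOf A) (frmMor A B h q) p' ->
  exists z, fsq (frmOf B) q z /\ frmMor A B h z = p'.
Proof.
  destruct (homP _ _ h) as [hm _ _ hl _ _].
  destruct q as [q Hq], p' as [p' Hp']; simpl; intro Sq.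
  pose proof (compatible_lew B HB q Hq) as Rq.
  set (G := fun y => exists a, p' a /\ hle B (h a) y).
  assert (HG : meet_closed B G).
  { split.
    - exists (htop A). split; [apply (pf_top _ _ Hp') | apply le_top, HB].
    - intros y1 y2 [a1 [P1 L1]] [a2 [P2 L2]]. exists (hmeet A a1 a2).
      split; [apply (pf_meet _ _ Hp'); assumption|]. rewrite hm. apply meet_mono; assumption. }
  pose proof (image_complement_lew_ideal q Hq p' Hp') as HJ.
  destruct (prime_filter_theorem B HB _ _ _ Rq HG HJ) as [z [Hz [Gz [Jz Rz]]]].
  - intros y [a [Pa L]] [b [Nb Q]]. apply Nb. apply (Sq a b); [|exact Pa].
    rewrite hl. eapply (pf_up _ _ Hq); [apply lew_anti_l; [exact HB | exact L] | exact Q].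
  - exists (exist _ z Hz). simpl. split.
    + intros c d Q Zc. exact (Rz c d Q Zc).
    + apply sig_ext; simpl. intro a. split.
      * intro Z. apply NNPP; intro N. apply (Jz (h a)); [|exact Z]. exists a; split; [exact N|].
        rewrite (lew_refl _ HB). apply (pf_top _ _ Hq).
      * intro Pa. apply Gz. exists a. split; [exact Pa | apply le_refl, HB].
Qed.

Lemma frm_hom : isDMor (frmOf B) (frmOf A) (frmMor A B h).
Proof.
  split.
  - intros x y H a; simpl; auto.
  - exact frmMor_le_back.
  - intros x y S a b; simpl. rewrite (hom_lew _ _ _ (homP _ _ h)). apply S.
  - exact frmMor_sq_back.
  - intros s [a E]; subst. exists (h a). reflexivity.
Qed.

End DualMorphism.

Lemma alg_le (X : DFrame) (a b : hcar (algOf X)) :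
  hle (algOf X) a b <-> (forall x, proj1_sig a x -> proj1_sig b x).
Proof.
  unfold hle; split.
  - intros E x Ha. pose proof (f_equal (fun s => proj1_sig s x) E) as E'.
    simpl in E'; unfold sand in E'. rewrite <- E' in Ha. tauto.
  - intros H. apply sig_ext. simpl. unfold sand. intro t; split; [tauto | auto].
Qed.

(* [X^*] is a Heyting–Lewis algebra: the equational axioms hold pointwise, and
   residuation and the Lewis axioms follow from [≼]-upward closure. *)
Lemma alg_HLA (X : DFrame) : isHLA (algOf X).
Proof.
  split; intros; try (apply sig_ext; simpl; unfold sand, sor, simp, slew; intros; tauto).
  - rewrite !alg_le; simpl; unfold sand, simp. split.
    + intros H x Ax y Le By. apply H. split; [|exact By].
      exact (d_upset _ (dax X) _ (proj2_sig a) x y Le Ax).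
    + intros H x [Ax Bx]. exact (H x Ax x (d_refl _ (dax X) x) Bx).
  - apply sig_ext; simpl; unfold sand, slew. intro t; split.
    + intros [H1 H2] y S Ay; split; eauto.
    + intros H; split; intros y S Z; apply H; auto.
  - apply sig_ext; simpl; unfold sand, sor, slew. intro t; split.
    + intros [H1 H2] y S [Ay | By]; eauto.
    + intros H; split; intros y S Z; apply H; auto.
  - rewrite alg_le; simpl; unfold sand, slew. intros x [H1 H2] y S Ay. eauto.
Qed.

(* [f⁻¹] preserves [⇒] and [⊸] thanks to the back conditions of [f]. *)
Lemma alg_hom (X Y : DFrame) (f : DMor X Y) : isHom (algOf Y) (algOf X) (algMor X Y f).
Proof.
  destruct f as [f [lf lb sf sb pre]]. split; intros; apply sig_ext; simpl;
    unfold sand, sor, simp, slew; intro t; try tauto.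
  - split.
    + intros H y Le Ay. apply (H (f y)); auto.
    + intros H z' Le Az. destruct (lb _ _ Le) as [z [Le' E]]. subst. auto.
  - split.
    + intros H y Le Ay. apply (H (f y)); auto.
    + intros H z' Le Az. destruct (sb _ _ Le) as [z [Le' E]]. subst. auto.
Qed.

Lemma algMor_id (X : DFrame) (i : DMor X X) :
  (forall x, i x = x) -> forall a, algMor X X i a = a.
Proof. intros Hi a. apply sig_ext; intro x; simpl. rewrite Hi. tauto. Qed.

Lemma algMor_comp (X Y Z : DFrame) (f : DMor X Y) (g : DMor Y Z) (gf : DMor X Z) :
  (forall x, gf x = g (f x)) -> forall a, algMor X Z gf a = algMor X Y f (algMor Y Z g a).
Proof. intros Hgf a. apply sig_ext; intro x; simpl. rewrite Hgf. tauto. Qed.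

Lemma frmMor_id (A : HLAraw) (i : Hom A A) :
  (forall a, i a = a) -> forall p, frmMor A A i p = p.
Proof. intros Hi p. apply sig_ext; intro a; simpl. rewrite Hi. tauto. Qed.

Lemma frmMor_comp (A B C : HLAraw) (h : Hom A B) (k : Hom B C) (kh : Hom A C) :
  (forall a, kh a = k (h a)) -> forall p, frmMor A C kh p = frmMor A B h (frmMor B C k p).
Proof. intros Hkh p. apply sig_ext; intro a; simpl. rewrite Hkh. tauto. Qed.

Lemma hom_inv (A B : HLAraw) (e : hcar A -> hcar B) (g : hcar B -> hcar A) :
  isHom A B e -> (forall a, g (e a) = a) -> (forall b, e (g b) = b) -> isHom B A g.
Proof.
  intros [hm hj hi hl ht hb] ge eg. split; intros.
  - rewrite <- (eg a), <- (eg b), <- hm, !ge. reflexivity.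
  - rewrite <- (eg a), <- (eg b), <- hj, !ge. reflexivity.
  - rewrite <- (eg a), <- (eg b), <- hi, !ge. reflexivity.
  - rewrite <- (eg a), <- (eg b), <- hl, !ge. reflexivity.
  - rewrite <- ht, ge. reflexivity.
  - rewrite <- hb, ge. reflexivity.
Qed.

Definition eta_map (A : HLAraw) (hd : isDescr (frmOf A)) (a : hcar A) :
  hcar (algOf (mkDF (frmOf A) hd)) :=
  exist _ (tilde A a) (ex_intro _ a eq_refl).

Lemma eta_hom (A : HLAraw) (hd : isDescr (frmOf A)) (HA : isHLA A) :
  isHom A (algOf (mkDF (frmOf A) hd)) (eta_map A hd).
Proof.
  split; intros; apply sig_eq.
  - exact (tilde_meet A HA a b).
  - exact (tilde_join A HA a b).
  - exact (eq_sym (tilde_imp A HA a b)).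
  - exact (eq_sym (tilde_lew A HA a b)).
  - exact (tilde_top A).
  - exact (tilde_bot A).
Qed.

Definition eta_inv (A : HLAraw) (hd : isDescr (frmOf A))
  (b : hcar (algOf (mkDF (frmOf A) hd))) : hcar A :=
  proj1_sig (constructive_indefinite_description _ (proj2_sig b)).

Lemma eta_inv_spec (A : HLAraw) (hd : isDescr (frmOf A))
    (b : hcar (algOf (mkDF (frmOf A) hd))) : proj1_sig b = tilde A (eta_inv A hd b).
Proof. unfold eta_inv. destruct (constructive_indefinite_description _ _) as [a E]. exact E. Qed.

Lemma eta_bij (A : HLAraw) (hd : isDescr (frmOf A)) (HA : isHLA A) :
  (forall a, eta_inv A hd (eta_map A hd a) = a) /\ (forall b, eta_map A hd (eta_inv A hd b) = b).
Proof.
  split.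
  - intro a. apply (tilde_inj A HA). rewrite <- eta_inv_spec. reflexivity.
  - intro b. apply sig_ext; intro p. simpl. rewrite <- eta_inv_spec. reflexivity.
Qed.

Lemma eta_natural (A B : HLAraw) (hdA : isDescr (frmOf A)) (hdB : isDescr (frmOf B))
    (h : Hom A B) (m : DMor (mkDF (frmOf B) hdB) (mkDF (frmOf A) hdA)) :
  (forall q, m q = frmMor A B h q) ->
  forall a, eta_map B hdB (h a) =
            algMor (mkDF (frmOf B) hdB) (mkDF (frmOf A) hdA) m (eta_map A hdA a).
Proof. intros Hm a. apply sig_ext; intro q; simpl. rewrite Hm. simpl. tauto. Qed.

Lemma point_filter (X : DFrame) (x : fcar X) : primef (algOf X) (fun a => proj1_sig a x).
Proof.
  split.
  - intros a b H Ha. rewrite alg_le in H. auto.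
  - intros a b Ha Hb; simpl; unfold sand; auto.
  - simpl; auto.
  - simpl; auto.
  - intros a b H; simpl in H; unfold sor in H; auto.
Qed.

Definition eps_map (X : DFrame) (x : fcar X) : fcar (frmOf (algOf X)) :=
  exist _ (fun a => proj1_sig a x) (point_filter X x).

(* [ε_X] reflects [≼] and [⊏] by the two refinedness conditions. *)
Lemma eps_le (X : DFrame) x y : fle X x y <-> fle (frmOf (algOf X)) (eps_map X x) (eps_map X y).
Proof.
  simpl. split.
  - intros L a Ha. exact (d_upset _ (dax X) _ (proj2_sig a) x y L Ha).
  - intros H. apply NNPP; intro N. destruct (d_le_ref _ (dax X) x y N) as [a [Pa [Ax Ay]]].
    exact (Ay (H (exist _ a Pa) Ax)).
Qed.

Lemma eps_sq (X : DFrame) x y : fsq X x y <-> fsq (frmOf (algOf X)) (eps_map X x) (eps_map X y).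
Proof.
  simpl. split.
  - intros S a b H Ay. exact (H y S Ay).
  - intros H. apply NNPP; intro N.
    destruct (d_sq_ref _ (dax X) x y N) as [a [b [Pa [Pb [S [Ay By]]]]]].
    exact (By (H (exist _ a Pa) (exist _ b Pb) S Ay)).
Qed.

Lemma eps_inj (X : DFrame) x y : eps_map X x = eps_map X y -> x = y.
Proof.
  intro E. apply (d_antisym _ (dax X)); apply eps_le; rewrite E; intros a Ha; exact Ha.
Qed.

Lemma finite_family_bound (X : DFrame) (y : fcar (frmOf (algOf X))) l :
  (forall s, In s l ->
     (exists a, proj1_sig y a /\ s = proj1_sig a) \/
     (exists a, ~ proj1_sig y a /\ s = (fun x => ~ proj1_sig a x))) ->
  exists a b, proj1_sig y a /\ ~ proj1_sig y b /\
    forall s, In s l -> forall x, proj1_sig a x -> ~ proj1_sig b x -> s x.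
Proof.
  destruct y as [y Hy]; simpl.
  induction l as [|s l IH]; intro HF.
  - exists (htop (algOf X)), (hbot (algOf X)).
    split; [apply (pf_top _ _ Hy) | split; [apply (pf_bot _ _ Hy) | contradiction]].
  - destruct IH as [a [b [Ya [Nb Hl]]]]; [intros; apply HF; simpl; auto|].
    destruct (HF s (or_introl eq_refl)) as [[c [Yc E]] | [c [Nc E]]]; subst.
    + exists (hmeet (algOf X) a c), b. split; [apply (pf_meet _ _ Hy); assumption|].
      split; [exact Nb|]. intros s [E | I] x [Ax Cx] Bx; subst; [exact Cx | exact (Hl s I x Ax Bx)].
    + exists a, (hjoin (algOf X) b c). split; [exact Ya|].
      split; [intro P; destruct (pf_prime _ _ Hy _ _ P); auto|].
      intros s [E | I] x Ax BCx; subst; simpl in BCx; unfold sor in BCx; [tauto|].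
      apply (Hl s I x Ax); tauto.
Qed.

(* Surjectivity of [ε_X] is compactness: a prime filter [y] of [X^*] is the
   point filter of any [x] in all [a ∈ y] and outside all [b ∉ y]. *)
Lemma eps_surj (X : DFrame) (y : fcar (frmOf (algOf X))) : exists x, eps_map X x = y.
Proof.
  set (F := fun s : fcar X -> Prop =>
     (exists a, proj1_sig y a /\ s = proj1_sig a) \/
     (exists a, ~ proj1_sig y a /\ s = (fun x => ~ proj1_sig a x))).
  destruct (d_compact _ (dax X) F) as [x Hx].
  - intros s [[a [_ E]] | [a [_ E]]]; subst.
    + left. exact (proj2_sig a).
    + right. exists (proj1_sig a); split; [exact (proj2_sig a) | reflexivity].
  - intros l Hl. destruct (finite_family_bound X y l Hl) as [a [b [Ya [Nb H]]]].
    apply NNPP; intro N. apply Nb. eapply (pf_up _ _ (proj2_sig y)); [|exact Ya].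
    apply alg_le. intros x Ax. apply NNPP; intro Bx. apply N. exists x.
    intros s I. exact (H s I x Ax Bx).
  - exists x. apply sig_ext. intro a; simpl. destruct (classic (proj1_sig y a)) as [Ya | Na].
    + split; [intros _; exact Ya | intros _]. apply (Hx (proj1_sig a)). left; exists a; auto.
    + split; [|contradiction]. intro Ax. exfalso.
      apply (Hx (fun x => ~ proj1_sig a x)); [|exact Ax].
      right; exists a; auto.
Qed.

Definition eps_inv (X : DFrame) (y : fcar (frmOf (algOf X))) : fcar X :=
  proj1_sig (constructive_indefinite_description _ (eps_surj X y)).

Lemma eps_inv_spec (X : DFrame) (y : fcar (frmOf (algOf X))) : eps_map X (eps_inv X y) = y.
Proof. unfold eps_inv. destruct (constructive_indefinite_description _ _) as [x E]. exact E. Qed.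

Lemma eps_inv_map (X : DFrame) (x : fcar X) : eps_inv X (eps_map X x) = x.
Proof. apply eps_inj, eps_inv_spec. Qed.

(* Both [ε_X] and its inverse are frame morphisms, since [ε_X] is a bijection
   preserving and reflecting both relations. *)
Lemma eps_mor (X : DFrame) : isDMor X (frmOf (algOf X)) (eps_map X).
Proof.
  split.
  - intros x y; apply eps_le.
  - intros x z' L. exists (eps_inv X z'). rewrite eps_inv_spec. split; [|reflexivity].
    apply eps_le. rewrite eps_inv_spec. exact L.
  - intros x y; apply eps_sq.
  - intros x z' L. exists (eps_inv X z'). rewrite eps_inv_spec. split; [|reflexivity].
    apply eps_sq. rewrite eps_inv_spec. exact L.
  - intros a' [a0 E]; subst. exact (proj2_sig a0).
Qed.

Lemma eps_inv_mor (X : DFrame) : isDMor (frmOf (algOf X)) X (eps_inv X).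
Proof.
  split.
  - intros y1 y2 L. apply eps_le. rewrite !eps_inv_spec. exact L.
  - intros y z' L. exists (eps_map X z'). rewrite eps_inv_map. split; [|reflexivity].
    rewrite <- (eps_inv_spec X y). apply eps_le. exact L.
  - intros y1 y2 L. apply eps_sq. rewrite !eps_inv_spec. exact L.
  - intros y z' L. exists (eps_map X z'). rewrite eps_inv_map. split; [|reflexivity].
    rewrite <- (eps_inv_spec X y). apply eps_sq. exact L.
  - intros a' Pa. exists (exist _ a' Pa). apply set_ext. intro y.
    rewrite <- (eps_inv_spec X y) at 2. simpl. reflexivity.
Qed.

Lemma eps_natural (X Y : DFrame) (f : DMor X Y) (k : Hom (algOf Y) (algOf X)) :
  (forall a, k a = algMor X Y f a) ->
  forall x, eps_map Y (f x) = frmMor (algOf Y) (algOf X) k (eps_map X x).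
Proof. intros Hk x. apply sig_ext; intro a; simpl. rewrite Hk. simpl. tauto. Qed.

Theorem theorem3p20 :
  (* (.)^* is a (contravariant) functor D-Frm -> HLAs *)
  (forall X : DFrame, isHLA (algOf X)) /\
  (forall (X Y : DFrame) (f : DMor X Y),
      isHom (algOf Y) (algOf X) (algMor X Y f)) /\
  (forall (X : DFrame) (i : DMor X X), (forall x, i x = x) ->
      forall a, algMor X X i a = a) /\
  (forall (X Y Z : DFrame) (f : DMor X Y) (g : DMor Y Z) (gf : DMor X Z),
      (forall x, gf x = g (f x)) ->
      forall a, algMor X Z gf a = algMor X Y f (algMor Y Z g a)) /\
  (* (.)_* is a (contravariant) functor HLAs -> D-Frm *)
  (forall A : HLAraw, isHLA A -> isDescr (frmOf A)) /\
  (forall (A B : HLAraw) (h : Hom A B), isHLA A -> isHLA B ->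
      isDMor (frmOf B) (frmOf A) (frmMor A B h)) /\
  (forall (A : HLAraw) (i : Hom A A), isHLA A -> (forall a, i a = a) ->
      forall p, frmMor A A i p = p) /\
  (forall (A B C : HLAraw) (h : Hom A B) (k : Hom B C) (kh : Hom A C),
      isHLA A -> isHLA B -> isHLA C ->
      (forall a, kh a = k (h a)) ->
      forall p, frmMor A C kh p = frmMor A B h (frmMor B C k p)) /\
  (* natural isomorphism  Id_HLAs ≅ ((.)_* )^* *)
  (exists eta : forall (A : HLAraw) (hd : isDescr (frmOf A)),
                  hcar A -> hcar (algOf (mkDF (frmOf A) hd)),
     (forall (A : HLAraw) (hd : isDescr (frmOf A)), isHLA A ->
        isHom A (algOf (mkDF (frmOf A) hd)) (eta A hd) /\
        exists g : hcar (algOf (mkDF (frmOf A) hd)) -> hcar A,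
          isHom (algOf (mkDF (frmOf A) hd)) A g /\
          (forall a, g (eta A hd a) = a) /\ (forall b, eta A hd (g b) = b)) /\
     (forall (A B : HLAraw) (hdA : isDescr (frmOf A)) (hdB : isDescr (frmOf B))
             (h : Hom A B) (m : DMor (mkDF (frmOf B) hdB) (mkDF (frmOf A) hdA)),
        isHLA A -> isHLA B ->
        (forall q, m q = frmMor A B h q) ->
        forall a, eta B hdB (h a) =
                  algMor (mkDF (frmOf B) hdB) (mkDF (frmOf A) hdA) m (eta A hdA a))) /\
  (* natural isomorphism  Id_D-Frm ≅ ((.)^* )_* *)
  (exists eps : forall (X : DFrame) (hd : isDescr (frmOf (algOf X))),
                  fcar X -> fcar (frmOf (algOf X)),
     (forall (X : DFrame) (hd : isDescr (frmOf (algOf X))),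
        isDMor X (frmOf (algOf X)) (eps X hd) /\
        exists g : fcar (frmOf (algOf X)) -> fcar X,
          isDMor (frmOf (algOf X)) X g /\
          (forall x, g (eps X hd x) = x) /\ (forall y, eps X hd (g y) = y)) /\
     (forall (X Y : DFrame) (hdX : isDescr (frmOf (algOf X)))
             (hdY : isDescr (frmOf (algOf Y)))
             (f : DMor X Y) (k : Hom (algOf Y) (algOf X)),
        (forall a, k a = algMor X Y f a) ->
        forall x, eps Y hdY (f x) = frmMor (algOf Y) (algOf X) k (eps X hdX x))).
Proof.
  split; [exact alg_HLA|].
  split; [exact alg_hom|].
  split; [exact algMor_id|].
  split; [exact algMor_comp|].
  split; [exact frm_descr|].
  split; [intros A B h HA HB; exact (frm_hom A B h HA HB)|].
  split; [intros A i _; exact (frmMor_id A i)|].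
  split; [intros A B C h k kh _ _ _; exact (frmMor_comp A B C h k kh)|].
  split.
  - exists eta_map. split.
    + intros A hd HA. split; [exact (eta_hom A hd HA)|].
      destruct (eta_bij A hd HA) as [inv_left inv_right].
      exists (eta_inv A hd). split; [|split; assumption].
      exact (hom_inv _ _ _ _ (eta_hom A hd HA) inv_left inv_right).
    + intros A B hdA hdB h m _ _. exact (eta_natural A B hdA hdB h m).
  - exists (fun X _ => eps_map X). split.
    + intros X _. split; [exact (eps_mor X)|].
      exists (eps_inv X). split; [exact (eps_inv_mor X)|].
      split; [exact (eps_inv_map X) | exact (eps_inv_spec X)].
    + intros X Y _ _. exact (eps_natural X Y).
Qed.
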